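(* Let $\mathbf{B}_{t|t-1}$, $\mathbf{B}_{t|t}$, $\bm{\Lambda}_t$, $\mathbf{L}_t$ be defined as in the multi-resolution filter. Assume that $\mathbf{R}_t$ and $\mathbf{H}_t$ are block-diagonal with blocks corresponding to the finest subregions, i.e.: for $i \in \mathcal{I}_{i_1,\ldots,i_M}$ and $j \in \mathcal{I}_{j_1,\ldots,j_M}$, $\mathbf{R}_t[i,j]=0$ unless $(i_1,\ldots,i_M)=(j_1,\ldots,j_M)$; if $\mathbf{H}_t[i,j]\neq 0$ then $\mathbf{H}_t[i,k]=0$ for all $k\notin \mathcal{I}_{j_1,\ldots,j_M}$; and if $i_1,i_2\in\mathcal{I}_{j_1,\ldots,j_M}$ with $i_1<i_2$, then every $i_3$ with $i_1<i_3<i_2$ also lies in $\mathcal{I}_{j_1,\ldots,j_M}$. Then: 1. $\bm{\Lambda}_t \in \mathcal{S}(\mathbf{B}_{t|t-1}'\mathbf{B}_{t|t-1})$; 2. $\mathbf{L}_t \in \mathcal{S}(\bm{\Lambda}_t^L)$ and $\mathbf{L}_t^{-1} \in \mathcal{S}(\bm{\Lambda}_t^L)$; 3. $\mathbf{B}_{t|t} \in \mathcal{S}(\mathbf{B}_{t|t-1})$.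
   Context: Linear Gaussian state-space model $\mathbf{y}_t=\mathbf{H}_t\mathbf{x}_t+\mathbf{v}_t$, $\mathbf{v}_t\sim\mathcal{N}(\mathbf{0},\mathbf{R}_t)$, $\mathbf{x}_t=\mathbf{A}_t\mathbf{x}_{t-1}+\mathbf{w}_t$, $\mathbf{w}_t\sim\mathcal{N}(\mathbf{0},\mathbf{Q}_t)$, with state on a grid of $n_\mathcal{G}$ points in a domain $\mathcal{D}$. The domain is recursively partitioned into $J$ subregions per level up to resolution $M$, giving regions $\mathcal{D}_{j_1,\ldots,j_m}$ with grid index sets $\mathcal{I}_{j_1,\ldots,j_m}$; knot sets $\mathcal{K}_{j_1,\ldots,j_m}\subset\mathcal{I}_{j_1,\ldots,j_m}$ of size $r_m$ partition $\{1,\ldots,n_\mathcal{G}\}$; grid elements are ordered lexicographically by finest region. The multi-resolution decomposition (MRD) of a covariance matrix $\bm{\Sigma}$ returns $\mathbf{B}=(\mathbf{B}^M,\ldots,\mathbf{B}^0)$ with $\mathbf{B}^m$ block-diagonal with blocks of size $|\mathcal{I}_{j_1,\ldots,j_m}|\times r_m$. In the multi-resolution filter, $\mathbf{B}_{t|t-1}=\mathrm{MRD}(\mathbf{A}_t\mathbf{B}_{t-1|t-1}\mathbf{B}_{t-1|t-1}'\mathbf{A}_t'+\mathbf{Q}_t)$, $\bm{\Lambda}_t=\mathbf{I}_{n_\mathcal{G}}+\mathbf{B}_{t|t-1}'\mathbf{H}_t'\mathbf{R}_t^{-1}\mathbf{H}_t\mathbf{B}_{t|t-1}$, $\mathbf{L}_t$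 is the lower Cholesky triangle of $\bm{\Lambda}_t$, and $\mathbf{B}_{t|t}=\mathbf{B}_{t|t-1}(\mathbf{L}_t^{-1})'$. $\mathcal{S}(\mathbf{G})$ denotes the set of matrices whose structural zeros include those of $\mathbf{G}$; $\mathbf{G}^L$ is the lower triangle of $\mathbf{G}$. *)

From HB Require Import structures.
From mathcomp Require Import all_boot all_order all_algebra.
Set Implicit Arguments. Unset Strict Implicit. Unset Printing Implicit Defensive.
Import Order.TTheory GRing.Theory Num.Theory.
Local Open Scope ring_scope.

(* S(G): matrices whose zeros include the structural zeros of G. *)
Definition inS (R : ringType) (m n : nat) (A : 'M[R]_(m, n))
  (G : 'I_m -> 'I_n -> bool) : Prop :=
  forall i j, ~~ G i j -> A i j = 0.

Definition pat_tmul (m n : nat) (G : 'I_m -> 'I_n -> bool) : 'I_n -> 'I_n -> bool :=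
  fun c d => [exists i, G i c && G i d].

Definition pat_lower (n : nat) (G : 'I_n -> 'I_n -> bool) : 'I_n -> 'I_n -> bool :=
  fun i j => G i j && (j <= i)%N.

Fixpoint lexle (J : nat) (s t : seq 'I_J) : bool :=
  match s, t with
  | [::], _ => true
  | _ :: _, [::] => false
  | x :: s', y :: t' => ((x < y)%N || ((x == y) && lexle s' t'))
  end.

(* Grid point i has finest region reg i = (j_1,...,j_M); its level-m region is
   take m (reg i).  Column c of B = (B^M,...,B^0) is a knot of the region
   creg c = (j_1,...,j_{clev c}) at resolution clev c.
   MRD structure of B: B[i,c] may be nonzero only if i lies in that region. *)
Definition mrd_pattern (J M n : nat) (reg : 'I_n -> M.-tuple 'I_J)
  (clev : 'I_n -> nat) (creg : 'I_n -> seq 'I_J) : 'I_n -> 'I_n -> bool :=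
  fun i c => take (clev c) (reg i) == creg c.

(* The multi-resolution setup:
   - grid points ordered lexicographically by finest region;
   - every column's region address has length equal to its level, level <= M;
   - each region at resolution m has exactly r m knots (columns);
   - knots are grid points of their region, and the knot sets partition the grid
     (knot : column -> grid index is a bijection);
   - columns ordered as (B^M, ..., B^0), within B^m by region in lexicographic
     order (block-diagonal structure of B^m w.r.t. the lexicographic grid order). *)
Definition mr_setup (J M n : nat) (r : nat -> nat) (reg : 'I_n -> M.-tuple 'I_J)
  (clev : 'I_n -> nat) (creg : 'I_n -> seq 'I_J) (knot : 'I_n -> 'I_n) : Prop :=
  [/\ (forall i j : 'I_n, (i < j)%N -> lexle (reg i) (reg j)),
      (forall c, size (creg c) = clev c /\ (clev c <= M)%N),
      (forall (m : nat) (a : m.-tuple 'I_J), (m <= M)%N ->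
          #|[set c | (clev c == m) && (creg c == tval a)]| = r m),
      bijective knot /\ (forall c, take (clev c) (reg (knot c)) = creg c)
    & (forall c d : 'I_n, (c < d)%N ->
          (clev d < clev c)%N || ((clev d == clev c) && lexle (creg c) (creg d)))].

Definition Lambda (R : comUnitRingType) (n p : nat) (B : 'M[R]_n)
  (H : 'M[R]_(p, n)) (Rt : 'M[R]_p) : 'M[R]_n :=
  1%:M + B^T *m H^T *m invmx Rt *m H *m B.

Definition is_lower_cholesky (R : realFieldType) (n : nat) (L Lam : 'M[R]_n) : Prop :=
  [/\ (forall i j : 'I_n, (i < j)%N -> L i j = 0),
      (forall i : 'I_n, 0 < L i i)
    & L *m L^T = Lam].

Definition spd (R : realFieldType) (p : nat) (A : 'M[R]_p) : Prop :=
  A^T = A /\ (forall v : 'cV[R]_p, v != 0 -> 0 < (v^T *m A *m v) ord0 ord0).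

(* B'B has the pattern P = G'G, where G, the MRD pattern of B, is nested: a
   column at level l is supported on one level-l region, and the region of a
   finer column lies inside that of any coarser column it meets.  Since levels
   decrease along the column order (B^M, ..., B^0), P has no fill-in: P i k,
   P k j and k <= i give P i j.  Block-diagonality of H and R, hence of R^-1,
   makes H'R^-1 H block-diagonal in the finest regions, on which G depends, so
   Lambda inherits P.  Without fill-in, neither the column-wise Cholesky
   recursion nor forward substitution for L^-1 creates entries outside the
   lower triangle of P, and by nesting again B L^-T keeps the pattern G. *)

From HB Require Import structures.
From mathcomp Require Import all_boot all_order all_algebra.
Import Order.TTheory GRing.Theory Num.Theory.
Local Open Scope ring_scope.
Set Implicit Arguments.
Unset Strict Implicit.

Definition same_block (T : eqType) m n (f : 'I_m -> T) (g : 'I_n -> T) :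
  'I_m -> 'I_n -> bool := fun i j => f i == g j.

Definition no_fill n (P : rel 'I_n) : Prop :=
  forall i j k : 'I_n, (k <= i)%N -> P i k -> P k j -> P i j.

Lemma ord_ltn_ind n (Q : 'I_n -> Prop) :
  (forall j : 'I_n, (forall k : 'I_n, (k < j)%N -> Q k) -> Q j) ->
  forall j, Q j.
Proof.
move=> step j; have [m] := ubnP j; elim: m j => // m IH j.
rewrite ltnS => le_jm; apply: step => k lt_kj.
exact/IH/(leq_trans lt_kj).
Qed.

Lemma inS_add1mx (R : nzRingType) n (X : 'M[R]_n) (P : rel 'I_n) :
  reflexive P -> inS X P -> inS (1%:M + X) P.
Proof.
move=> Prefl XP i j nPij; rewrite !mxE XP // addr0.
by case: eqVneq nPij => // ->; rewrite Prefl.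
Qed.

Lemma inS_mulmx_tr (R : nzRingType) m n k (B : 'M[R]_(m, n)) (N : 'M[R]_(k, n))
    (G : 'I_m -> 'I_n -> bool) (Q : 'I_k -> 'I_n -> bool)
    (G' : 'I_m -> 'I_k -> bool) :
  (forall i c d, G i d -> Q c d -> G' i c) ->
  inS B G -> inS N Q -> inS (B *m N^T) G'.
Proof.
move=> GQ BG NQ i c nG'ic; rewrite mxE big1 // => d _; rewrite mxE.
have [Gid|nGid] := boolP (G i d); last by rewrite BG // mul0r.
have [Qcd|nQcd] := boolP (Q c d); last by rewrite NQ // mulr0.
by move: nG'ic; rewrite (GQ i c d).
Qed.

Lemma invmx_same_block (R : comUnitRingType) (T : eqType) p (f : 'I_p -> T)
    (A : 'M[R]_p) :
  inS A (same_block f f) -> inS (invmx A) (same_block f f).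
Proof.
move=> Af i j; rewrite /same_block => nfij.
have [uA|nuA] := boolP (A \in unitmx); last by rewrite invmx_out ?inE // Af.
pose D := diag_mx (\row_k ((f k == f j)%:R : R)).
(* D projects onto the block of j; it commutes with A, hence with A^-1. *)
have DA : D *m A = A *m D.
  apply/matrixP => k l; rewrite mul_diag_mx mul_mx_diag !mxE.
  by case: (eqVneq (f k) (f l)) => [->|nkl]; [rewrite mulrC | rewrite Af // mulr0 mul0r].
have AiD : invmx A *m D = D *m invmx A.
  rewrite -[invmx A *m D]mulmx1 -(mulmxV uA) !mulmxA -(mulmxA _ D A) DA mulmxA.
  by rewrite (mulVmx uA) mul1mx.
have := congr1 (fun X : 'M[R]_p => X i j) AiD.
by rewrite /= mul_diag_mx mul_mx_diag !mxE eqxx (negbTE nfij) mulr1 mul0r.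
Qed.

Lemma mulmx_tr_same_block (R : nzRingType) (T : eqType) p n (f : 'I_p -> T)
    (g : 'I_n -> T) (H : 'M[R]_(p, n)) (X : 'M[R]_p) :
  inS H (same_block f g) -> inS X (same_block f f) ->
  inS (H^T *m X *m H) (same_block g g).
Proof.
move=> Hfg Xf i j ngij; rewrite mxE big1 // => l _; rewrite mxE.
have [flj|nflj] := eqVneq (f l) (g j); last by rewrite Hfg ?nflj // mulr0.
rewrite big1 ?mul0r // => k _; rewrite mxE.
have [fki|nfki] := eqVneq (f k) (g i); last by rewrite Hfg ?nfki // mul0r.
by rewrite Xf ?mulr0 // /same_block fki flj.
Qed.

Lemma tmul_same_block_sparse (R : nzRingType) (T : eqType) m n (f : 'I_m -> T)
    (G : 'I_m -> 'I_n -> bool) (B : 'M[R]_(m, n)) (X : 'M[R]_m) :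
  (forall i j c, f i = f j -> G i c = G j c) ->
  inS B G -> inS X (same_block f f) -> inS (B^T *m X *m B) (pat_tmul G).
Proof.
move=> Gf BG Xf c d nPcd; rewrite mxE big1 // => j _; rewrite mxE big_distrl.
rewrite big1 // => i _ /=; rewrite !mxE.
have [Gic|nGic] := boolP (G i c); last by rewrite (BG i c) // !mul0r.
have [Gjd|nGjd] := boolP (G j d); last by rewrite (BG j d) // mulr0.
have [fij|nfij] := eqVneq (f i) (f j); last by rewrite Xf ?nfij // mulr0 mul0r.
by case/existsP: nPcd; exists j; rewrite -(Gf i) ?Gic.
Qed.

Section NoFill.

Variables (F : fieldType) (n : nat) (P : rel 'I_n).
Hypothesis P_fill : no_fill P.

Lemma cholesky_factor_sparse (L A : 'M[F]_n) :
  symmetric P ->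
  (forall i j : 'I_n, (i < j)%N -> L i j = 0) -> (forall i, L i i != 0) ->
  L *m L^T = A -> inS A P -> inS L (pat_lower P).
Proof.
move=> Psym Llow Ldiag LLt AP i j; elim/ord_ltn_ind: j i => j IH i nPij.
have [lt_ij|le_ji] := ltnP i j; first exact: Llow.
have nPij' : ~~ P i j by move: nPij; rewrite /pat_lower le_ji andbT.
have rowij : \sum_k L i k * L j k = 0.
  by rewrite -[RHS](AP i j nPij') -LLt mxE; apply: eq_bigr => k _; rewrite mxE.
rewrite (bigD1 j) //= big1 ?addr0 in rowij.
  by apply: (mulIf (Ldiag j)); rewrite mul0r.
move=> k nkj; have [lt_jk|le_kj] := ltnP j k; first by rewrite (Llow j k) ?mulr0.
have lt_kj : (k < j)%N by rewrite ltn_neqAle le_kj andbT.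
have [Pik|nPik] := boolP (pat_lower P i k); last by rewrite (IH k lt_kj i) ?mul0r.
have [Pjk|nPjk] := boolP (pat_lower P j k); last by rewrite (IH k lt_kj j) ?mulr0.
case/andP: Pik => Pik le_ki; case/andP: Pjk => Pjk _.
by move: nPij'; rewrite (P_fill le_ki Pik) // Psym.
Qed.

Lemma lower_trig_unitmx (L : 'M[F]_n) :
  (forall i j : 'I_n, (i < j)%N -> L i j = 0) -> (forall i, L i i != 0) ->
  L \in unitmx.
Proof.
move=> Llow Ldiag; rewrite unitmxE det_trig; last exact/is_trig_mxP.
by rewrite unitfE; apply/prodf_neq0 => i _.
Qed.

Lemma invmx_lower_sparse (L : 'M[F]_n) :
  reflexive P -> inS L (pat_lower P) -> (forall i, L i i != 0) ->
  inS (invmx L) (pat_lower P).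
Proof.
move=> Prefl LP Ldiag.
have Llow (i j : 'I_n) : (i < j)%N -> L i j = 0.
  by move=> lt_ij; rewrite LP // /pat_lower leqNgt lt_ij andbF.
have LN := mulmxV (lower_trig_unitmx Llow Ldiag).
move=> i j; elim/ord_ltn_ind: i j => i IH j nPij.
have nij : i != j by apply: contraNneq nPij => ->; rewrite /pat_lower Prefl leqnn.
have := congr1 (fun X : 'M[F]_n => X i j) LN; rewrite /= !mxE (negbTE nij).
rewrite (bigD1 i) //= big1 ?addr0 => [rowij|k nki].
  by apply: (mulfI (Ldiag i)); rewrite mulr0.
have [Pik|nPik] := boolP (pat_lower P i k); last by rewrite LP ?mul0r.
case/andP: Pik => Pik le_ki.
have lt_ki : (k < i)%N by rewrite ltn_neqAle le_ki andbT.
have [Pkj|nPkj] := boolP (pat_lower P k j); last by rewrite IH ?mulr0.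
case/andP: Pkj => Pkj le_jk.
by move: nPij; rewrite /pat_lower (P_fill le_ki Pik Pkj) (leq_trans le_jk le_ki).
Qed.

End NoFill.

Lemma pat_tmul_sym m n (G : 'I_m -> 'I_n -> bool) : symmetric (pat_tmul G).
Proof.
by move=> c d; apply/existsP/existsP => -[g Gg]; exists g; rewrite andbC.
Qed.

Section MRDPattern.

Variables (J M n : nat) (reg : 'I_n -> M.-tuple 'I_J) (clev : 'I_n -> nat)
  (creg : 'I_n -> seq 'I_J).

Local Notation G := (mrd_pattern reg clev creg).

Lemma levels_nonincreasing :
  (forall c d : 'I_n, (c < d)%N ->
     (clev d < clev c)%N || ((clev d == clev c) && lexle (creg c) (creg d))) ->
  {homo clev : c d /~ (c <= d)%N}.
Proof.
move=> ord c d; rewrite leq_eqVlt => /orP[/eqP/val_inj-> //|/ord].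
by case/orP => [/ltnW //|/andP[/eqP-> _]].
Qed.

Lemma mrd_pattern_refl (knot : 'I_n -> 'I_n) :
  (forall c, take (clev c) (reg (knot c)) = creg c) -> reflexive (pat_tmul G).
Proof.
by move=> knotP c; apply/existsP; exists (knot c); rewrite /mrd_pattern knotP eqxx.
Qed.

Lemma mrd_pattern_coarsen (i c d : 'I_n) :
  (clev c <= clev d)%N -> G i d -> pat_tmul G c d -> G i c.
Proof.
rewrite /pat_tmul /mrd_pattern => le_cd /eqP Gid /existsP[g /andP[/eqP Ggc /eqP Ggd]].
by rewrite -(take_takel _ le_cd) Gid -Ggd take_takel // Ggc.
Qed.

Lemma mrd_no_fill :
  {homo clev : c d /~ (c <= d)%N} -> no_fill (pat_tmul G).
Proof.
move=> clev_homo i j k le_ki Pik /existsP[g /andP[Ggk Ggj]].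
apply/existsP; exists g; rewrite Ggj andbT.
exact: mrd_pattern_coarsen (clev_homo _ _ le_ki) Ggk Pik.
Qed.

End MRDPattern.

Theorem proposition3
  (R : realFieldType) (J M n p : nat) (r : nat -> nat)
  (reg : 'I_n -> M.-tuple 'I_J) (clev : 'I_n -> nat) (creg : 'I_n -> seq 'I_J)
  (knot : 'I_n -> 'I_n)
  (obsreg : 'I_p -> M.-tuple 'I_J)
  (Bpred : 'M[R]_n) (H : 'M[R]_(p, n)) (Rt : 'M[R]_p) (L : 'M[R]_n) :
  mr_setup r reg clev creg knot ->
  (* B_{t|t-1} is the output of an MRD: block structure of (B^M,...,B^0) *)
  inS Bpred (mrd_pattern reg clev creg) ->
  (* R_t is a covariance matrix *)
  spd Rt ->
  (* observations are grouped by finest region, contiguously *)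
  (forall i1 i2 i3 : 'I_p, (i1 < i3)%N -> (i3 < i2)%N ->
      obsreg i1 = obsreg i2 -> obsreg i3 = obsreg i1) ->
  (* R_t block-diagonal w.r.t. finest subregions *)
  (forall i j : 'I_p, obsreg i != obsreg j -> Rt i j = 0) ->
  (* H_t block-diagonal w.r.t. finest subregions *)
  (forall (i : 'I_p) (j : 'I_n), obsreg i != reg j -> H i j = 0) ->
  is_lower_cholesky L (Lambda Bpred H Rt) ->
  [/\ inS (Lambda Bpred H Rt) (pat_tmul (mrd_pattern reg clev creg)),
      inS L (pat_lower (pat_tmul (mrd_pattern reg clev creg))),
      inS (invmx L) (pat_lower (pat_tmul (mrd_pattern reg clev creg)))
    & inS (Bpred *m (invmx L)^T) (mrd_pattern reg clev creg)].
Proof.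
move=> [_ _ _ [_ knotP] ord] BG _ _ Rblock Hblock [Llow Lpos LLt].
set G := mrd_pattern reg clev creg.
have clev_homo := levels_nonincreasing ord.
have Prefl : reflexive (pat_tmul G) := mrd_pattern_refl knotP.
have Pfill : no_fill (pat_tmul G) := mrd_no_fill clev_homo.
have Ldiag i : L i i != 0 by rewrite lt0r_neq0.
have LambdaP : inS (Lambda Bpred H Rt) (pat_tmul G).
  have -> : Lambda Bpred H Rt = 1%:M + Bpred^T *m (H^T *m invmx Rt *m H) *m Bpred.
    by rewrite /Lambda !mulmxA.
  apply: inS_add1mx => //.
  apply: (tmul_same_block_sparse (f := reg)) BG _ => [i j c fij|].
    by rewrite /mrd_pattern fij.
  exact: mulmx_tr_same_block Hblock (invmx_same_block Rblock).
have LP := cholesky_factor_sparse Pfill (pat_tmul_sym _) Llow Ldiag LLt LambdaP.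
have NP := invmx_lower_sparse Pfill Prefl LP Ldiag.
split=> //; apply: inS_mulmx_tr BG NP => i c d Gid /andP[Pcd le_dc].
exact: mrd_pattern_coarsen (clev_homo _ _ le_dc) Gid Pcd.
Qed.
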